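(* Let $G$ be a finite group and $N$ a proper normal subgroup of $G$. Then: (1) $\eta(G/N) \le \eta(G)$. (2) $\eta(G/N) = \eta(G)$ if and only if all of the following hold: (a) $N \subseteq G^-$; (b) $(G/N)^- = \{ gN \in G/N : gN \subseteq G^-\}$ (here $gN$ is viewed as a subset of $G$); (c) for every $x \in G \setminus G^-$, every element of $xN \setminus G^-$ is conjugate in $G$ to a generator of $\langle x \rangle$. (3) If $G$ is a $p$-group and $\eta(G/N) = \eta(G)$, then $G^-$ is a union of cosets of $N$. (4) $\eta(G/N) = \eta(G)$ and $G^-$ is a union of cosets of $N$ if and only if for every $x \in G \setminus G^-$, every element of $xN$ is conjugate in $G$ to a generator of $\langle x \rangle$. (5) If $\eta(G/N) = \eta(G)$ and $G^-$ is a union of cosets of $N$, then (a) $G^- N = G^-$ and (b) $(G/N)^- = G^-N/N$.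
   Context: A cyclic subgroup $C$ of a group $G$ is maximal cyclic if there is no cyclic subgroup $D$ of $G$ with $C < D$. $\eta(G)$ denotes the number of conjugacy classes of maximal cyclic subgroups of $G$. For a group $G$, $G^- = \{ g \in G : \langle g \rangle \text{ is not maximal cyclic in } G\}$; similarly $(G/N)^-$ is the set of elements of $G/N$ generating a cyclic subgroup that is not maximal cyclic in $G/N$. For subsets $S,T \subseteq G$, $ST = \{st : s \in S, t \in T\}$, and $SN/N = \{ sN : s \in S\} \subseteq G/N$. *)

From HB Require Import structures.
From mathcomp Require Import all_boot all_fingroup all_solvable.
Set Implicit Arguments. Unset Strict Implicit. Unset Printing Implicit Defensive.

Section Defs.
Variable gT : finGroupType.
Implicit Types (G N C : {set gT}).
Open Scope group_scope.

Definition maxcyclic G C : bool := [max C of H | (H \subset G) && cyclic H].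

Definition maxcycs G : {set {set gT}} := [set C | maxcyclic G C].

Definition eta_mc G : nat := #|[set C :^: G | C in maxcycs G]|.

Definition Gminus G : {set gT} := [set g in G | ~~ maxcyclic G <[g]>].

Definition union_of_cosets (A N : {set gT}) : Prop :=
  exists X : {set gT}, A = \bigcup_(x in X) (x *: N).
End Defs.

(* A generator of the image of a cyclic group <[h]> under a morphism f lifts
   to a generator of <[h]>: if k is prime to #[f h], then
   k + #[f h] * #[h]`_(\pi(k)^') is prime to #[h].  Hence the maximal cyclic
   subgroups of G/N are exactly the C/N with C maximal cyclic in G and C/N
   still maximal cyclic, and their G/N-classes are the images of the G-classes
   of these C.  So eta(G/N) <= eta(G), with equality iff C/N is maximal cyclic
   for every maximal cyclic C (maxcyclic_quotient_stable) and the induced map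
   on classes is injective (maxcyclic_class_quotient_inj); read element-wise,
   these two conditions are (b) and (c).  The remaining
   parts compare G^- with its N-cosets; for (3), in a p-group an element whose
   image generates a nontrivial <[hN]> already generates <[h]>. *)

From HB Require Import structures.
From mathcomp Require Import all_boot all_fingroup all_solvable.
Set Implicit Arguments. Unset Strict Implicit. Unset Printing Implicit Defensive.

Lemma coprime_add_mul_part k m n : 0 < k -> 0 < n -> coprime k m ->
  coprime (k + m * n`_(\pi(k)^')) n.
Proof.
move=> k_gt0 n_gt0 co_km; set t := n`_(\pi(k)^').
have t_gt0 : 0 < t by rewrite part_gt0.
rewrite coprime_pi' ?addn_gt0 ?k_gt0 //; apply/pnatP => //= p p_pr p_n.
rewrite !inE /= mem_primes p_pr addn_gt0 k_gt0 /=.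
have [p_k | p'k] := boolP (p %| k).
  have p'm : ~~ (p %| m) by rewrite -prime_coprime // (coprime_dvdl p_k co_km).
  have p't : ~~ (p %| t).
    apply/negP => p_t; have := pnatPpi (part_pnat _ n) (_ : p \in \pi(t)).
    by rewrite mem_primes p_pr t_gt0 p_t !inE /= mem_primes p_pr k_gt0 p_k => /(_ isT).
  by rewrite dvdn_addr // Euclid_dvdM // negb_or p'm.
have p_t : p %| t.
  have p_pi' : p \in \pi(k)^' by rewrite !inE /= mem_primes p_pr k_gt0 (negPf p'k).
  by rewrite -(part_pnat_id (_ : \pi(k)^'.-nat p)) ?partn_dvd ?pnatE.
by rewrite dvdn_addl ?dvdn_mull.
Qed.

Lemma coprime_mod_lift k m n : 0 < n -> coprime k m ->
  exists2 k', k' = k %[mod m] & coprime k' n.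
Proof.
move=> n_gt0 co_km; have [k0 | k_gt0] := posnP k.
  move: co_km; rewrite k0 /coprime gcd0n => /eqP->.
  by exists 1; rewrite ?modn1 ?gcd1n.
exists (k + m * n`_(\pi(k)^')); last exact: coprime_add_mul_part.
by rewrite mulnC addnC modnMDl.
Qed.

Lemma eq_card_imset_subset (aT rT : finType) (f : aT -> rT) (A B : {set aT}) :
  A \subset B -> #|f @: A| = #|B| <-> A = B /\ {in A &, injective f}.
Proof.
move=> sAB; split=> [eq_fA_B | [-> injf]]; last exact: card_in_imset.
have eq_A_B : #|A| = #|B|.
  by apply/eqP; rewrite eqn_leq subset_leq_card // -eq_fA_B leq_imset_card.
split; first by apply/eqP; rewrite eqEcard sAB eq_A_B leqnn.
by apply/imset_injP; rewrite eq_fA_B eq_A_B.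
Qed.

Open Scope group_scope.

Lemma generator_lift (aT rT : finGroupType) (D : {group aT})
    (f : {morphism D >-> rT}) x u :
  x \in D -> generator <[f x]> u -> exists2 z, generator <[x]> z & f z = u.
Proof.
move=> Dx gen_u; have /cycleP[k def_u] := cycle_generator gen_u.
move: gen_u; rewrite {}def_u generator_coprime coprime_sym => co_k.
have [k' eq_k' co_k'] := coprime_mod_lift (order_gt0 x) co_k.
exists (x ^+ k'); first by rewrite generator_coprime coprime_sym.
by rewrite morphX // -expg_mod_order eq_k' expg_mod_order.
Qed.

Lemma p_elt_morph_generator (aT rT : finGroupType) (D : {group aT})
    (f : {morphism D >-> rT}) (p : nat) h x :
  p.-elt h -> h \in D -> f h != 1 -> x \in <[h]> ->
  generator <[f h]> (f x) -> generator <[h]> x.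
Proof.
move=> p_h Dh ntfh /cycleP[j ->]; rewrite morphX // !generator_coprime.
have [a ->] := p_natP p_h.
have [b ofh] := p_natP (pnat_dvd (morph_order f Dh) p_h).
have b_gt0 : 0 < b by move: ntfh; rewrite -order_eq1 ofh; case: b {ofh}.
by rewrite ofh coprime_pexpl // => /coprimeXl.
Qed.

Lemma conjugates_eqP (gT : finGroupType) (G : {group gT}) (A B : {set gT}) :
  reflect (A :^: G = B :^: G) (A \in B :^: G).
Proof.
apply: (iffP idP) => [/imsetP[g Gg ->] | <-]; first by rewrite conjugates_conj lcoset_id.
by apply/imsetP; exists 1; rewrite ?conjsg1.
Qed.

Lemma cycle_conjugatesP (gT : finGroupType) (G : {group gT}) x y :
  reflect (exists2 z, generator <[x]> z & y \in z ^: G) (<[y]> \in <[x]> :^: G).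
Proof.
apply: (iffP imsetP) => [[g Gg eqY] | [z /eqP genZ /imsetP[g Gg ->]]].
  exists (y ^ g^-1); first by rewrite /generator cycleJ eqY conjsgK.
  by apply/imsetP; exists g; rewrite ?conjgKV.
by exists g; rewrite // cycleJ genZ.
Qed.

Section UnionOfCosets.
Variables (gT : finGroupType) (N : {group gT}).
Implicit Type A : {set gT}.

Lemma union_of_cosetsP A : union_of_cosets A N <-> {in A, forall x, x *: N \subset A}.
Proof.
split=> [[X ->] x /bigcupP[w Xw xNw] | clA].
  by rewrite (lcoset_eqP xNw); apply: (bigcup_max w).
exists A; apply/eqP; rewrite eqEsubset; apply/andP; split.
  by apply/subsetP=> x Ax; apply/bigcupP; exists x; rewrite ?lcoset_refl.
by apply/bigcupsP.
Qed.

Lemma union_of_cosetsC A : union_of_cosets (~: A) N <-> union_of_cosets A N.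
Proof.
suff clC B : union_of_cosets B N -> union_of_cosets (~: B) N.
  by split=> [/clC|/clC //]; rewrite setCK.
move/union_of_cosetsP=> clB; apply/union_of_cosetsP=> x; rewrite inE => B'x.
apply/subsetP=> y yNx; rewrite inE; apply: contra B'x => By.
by apply: (subsetP (clB y By)); rewrite lcoset_sym.
Qed.

Lemma union_of_cosets_mulg A : union_of_cosets A N -> A * N = A.
Proof.
move/union_of_cosetsP=> clA; apply/eqP; rewrite eqEsubset mulG_subl andbT.
apply/subsetP=> _ /mulsgP[x n Ax Nn ->]; apply: (subsetP (clA x Ax)).
by rewrite mem_lcoset mulKg.
Qed.

End UnionOfCosets.

Section MaxCyclic.
Variables (gT : finGroupType) (G : {group gT}).
Implicit Types (C : {set gT}) (x y : gT).

Lemma maxcyclic_cycle C : maxcyclic G C -> exists2 x, x \in G & C = <[x]>.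
Proof.
case/maxsetp/andP=> grC; rewrite /= (gen_set_id grC) => /andP[sCG /cyclicP[x defC]].
by exists x; rewrite // -cycle_subG -defC.
Qed.

Lemma maxcyclic_subG C : maxcyclic G C -> C \subset G.
Proof. by case/maxcyclic_cycle=> x Gx ->; rewrite cycle_subG. Qed.

Lemma maxcyclic_mem x : maxcyclic G <[x]> -> x \in G.
Proof. by rewrite -cycle_subG; apply: maxcyclic_subG. Qed.

Lemma mem_setD_Gminus x : (x \in G :\: Gminus G) = maxcyclic G <[x]>.
Proof.
rewrite !inE; case max_x: (maxcyclic G <[x]>); last by rewrite andbT andNb.
by rewrite andbF (maxcyclic_mem max_x).
Qed.

Lemma maxcyclicP x : x \in G ->
  reflect (forall y, y \in G -> <[x]> \subset <[y]> -> <[y]> \subset <[x]>)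
          (maxcyclic G <[x]>).
Proof.
move=> Gx; apply: (iffP maxgroupP) => [[_ maxX] y Gy sXY | maxX].
  by rewrite (maxX <[y]>%G) // cycle_subG Gy cycle_cyclic.
split=> [|H /andP[sHG /cyclicP[y defH]] sXH]; first by rewrite cycle_subG Gx cycle_cyclic.
have Gy : y \in G by rewrite -cycle_subG -defH.
by apply/eqP; rewrite eqEsubset sXH andbT defH maxX -?defH.
Qed.

Lemma maxcyclic_exists x : x \in G -> exists2 h, maxcyclic G <[h]> & x \in <[h]>.
Proof.
move=> Gx; pose P (H : {group gT}) := (H \subset G) && cyclic H.
have [|H maxH sXH] := @maxgroup_exists _ P <[x]>%G.
  by rewrite /P cycle_subG Gx cycle_cyclic.
have [h _ defH] := maxcyclic_cycle maxH.
by exists h; rewrite -defH // -cycle_subG.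
Qed.

Lemma maxcyclicJ C g : g \in G -> maxcyclic G (C :^ g) = maxcyclic G C.
Proof.
suff maxJ D y : y \in G -> maxcyclic G D -> maxcyclic G (D :^ y).
  move=> Gg; apply/idP/idP; last exact: maxJ.
  by move/(maxJ _ g^-1); rewrite conjsgK groupV; apply.
move=> Gy maxD; have [x _ defD] := maxcyclic_cycle maxD; rewrite {}defD in maxD *.
move/maxgroupP: maxD => [/andP[sXG cycX] maxX].
apply/maxgroupP; split=> [|H /andP[sHG cycH] sXyH].
  by rewrite /= cyclicJ cycX andbT sub_conjg conjGid ?groupV.
have sXHy : <[x]> \subset H :^ y^-1 by rewrite -sub_conjg.
have := maxX (H :^ y^-1)%G; rewrite /= cyclicJ cycH sub_conjgV conjGid // sHG.
by move=> /(_ isT sXHy) <-; rewrite conjsgKV.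
Qed.

Lemma maxcyclic_trivial : maxcyclic G 1 -> G :=: 1.
Proof.
move=> max1; have {max1}/(maxcyclicP (group1 G)) max1 : maxcyclic G <[1]>.
  by rewrite cycle1.
apply/trivgP/subsetP=> x Gx; rewrite -cycle_subG.
by have := max1 x Gx; rewrite cycle1 sub1G; apply.
Qed.

End MaxCyclic.

Definition maxcyclic_quotient_stable (gT : finGroupType) (G N : {group gT}) :=
  forall x, maxcyclic G <[x]> -> maxcyclic (G / N) <[coset N x]>.

Definition maxcyclic_class_quotient_inj (gT : finGroupType) (G N : {group gT}) :=
  forall x y, maxcyclic G <[x]> -> maxcyclic G <[y]> ->
    <[coset N y]> \in <[coset N x]> :^: (G / N) -> <[y]> \in <[x]> :^: G.

Section Quotient.
Variables (gT : finGroupType) (G N : {group gT}).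
Hypothesis nsNG : N <| G.
Let nNG : G \subset 'N(N) := normal_norm nsNG.
Let sNG : N \subset G := normal_sub nsNG.
Implicit Types (C : {set gT}) (x y : gT).

Lemma coset_lcoset x : x \in G -> coset N x :=: x *: N.
Proof. by move=> Gx; rewrite val_coset ?norm_rlcoset ?(subsetP nNG). Qed.

Lemma mem_lcoset_coset x y : x \in G ->
  (y \in x *: N) = (y \in G) && (coset N y == coset N x).
Proof.
move=> Gx; have Nx := subsetP nNG x Gx; rewrite -norm_rlcoset //.
apply/idP/andP=> [yNx | [Gy /eqP]].
  have Gy : y \in G.
    by move: yNx; rewrite mem_rcoset => /(subsetP sNG); rewrite groupMr ?groupV.
  by split=> //; apply/eqP/rcoset_kercosetP; rewrite ?(subsetP nNG).
by move/rcoset_kercosetP; apply; rewrite (subsetP nNG).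
Qed.

Lemma quotient_conjugates C : [set D / N | D in C :^: G] = (C / N) :^: (G / N).
Proof.
apply/setP=> D; apply/imsetP/imsetP.
  case=> _ /imsetP[g Gg ->] ->.
  by exists (coset N g); rewrite ?mem_quotient ?quotientJ ?(subsetP nNG).
case=> _ /morphimP[g _ Gg ->] ->.
by exists (C :^ g); rewrite ?imset_f ?quotientJ ?(subsetP nNG).
Qed.

Lemma maxcyclic_quotient_generator x h : x \in G -> h \in G -> x \in <[h]> ->
  maxcyclic (G / N) <[coset N x]> -> generator <[coset N h]> (coset N x).
Proof.
move=> Gx Gh hx /maxcyclicP maxX.
have hNx : coset N x \in <[coset N h]>.
  by rewrite -quotient_cycle ?mem_quotient ?(subsetP nNG).
by rewrite /generator eq_sym eqEsubset cycle_subG hNx maxX ?mem_quotient ?cycle_subG.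
Qed.

Lemma maxcyclic_quotient_lift u : u \in G / N -> maxcyclic (G / N) <[u]> ->
  exists2 h, maxcyclic G <[h]> & coset N h = u.
Proof.
case/morphimP=> g _ Gg -> maxU; have [h maxH hg] := maxcyclic_exists Gg.
have Gh := maxcyclic_mem maxH.
have genU := maxcyclic_quotient_generator Gg Gh hg maxU.
have [z /eqP genZ gz] := generator_lift (subsetP nNG h Gh) genU.
by exists z; rewrite -?genZ.
Qed.

Lemma quotient_maxcyclic1 : N \proper G -> ~~ maxcyclic (G / N) 1.
Proof.
move=> ltNG; apply/negP=> /maxcyclic_trivial/trivgP.
by rewrite quotient_sub1 // => sGN; case/negP: (proper_subn ltNG).
Qed.

Let Mq := [set C in maxcycs G | maxcyclic (G / N) (C / N)].

Let sub_Mq_maxcycs : Mq \subset maxcycs G.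
Proof. by apply/subsetP=> C; rewrite inE => /andP[]. Qed.

Lemma maxcycs_quotient : maxcycs (G / N) = [set C / N | C in Mq].
Proof.
apply/setP=> D; apply/idP/imsetP=> [|[C]]; last by rewrite !inE => /andP[_ ?] ->.
rewrite inE => maxD; have [u Gu defD] := maxcyclic_cycle maxD; rewrite defD in maxD.
have [h maxH hu] := maxcyclic_quotient_lift Gu maxD.
have Nh := subsetP nNG h (maxcyclic_mem maxH).
by exists <[h]>; rewrite ?inE quotient_cycle // hu ?maxH.
Qed.

Lemma eta_quotient :
  eta_mc (G / N) =
  #|[set [set D / N | D in K] | K : {set {set gT}} in [set C :^: G | C in Mq]]|.
Proof.
rewrite /eta_mc maxcycs_quotient -!imset_comp.
by under eq_imset => C do rewrite /= -quotient_conjugates.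
Qed.

Lemma eta_quotient_leq : eta_mc (G / N) <= eta_mc G.
Proof.
rewrite eta_quotient; apply: leq_trans (leq_imset_card _ _) _.
exact/subset_leq_card/imsetS.
Qed.

Lemma maxcycs_quotient_stable : Mq = maxcycs G <-> maxcyclic_quotient_stable G N.
Proof.
split=> [eqM x maxX | stab].
  have: <[x]> \in Mq by rewrite eqM inE.
  by rewrite inE => /andP[_]; rewrite quotient_cycle ?(subsetP nNG) ?maxcyclic_mem.
apply/setP=> C; rewrite !inE; apply: andb_idr => maxC.
have [x Gx defC] := maxcyclic_cycle maxC; rewrite defC in maxC *.
by rewrite quotient_cycle ?(subsetP nNG) ?stab.
Qed.

Lemma maxcyc_classes_quotient_stable :
  [set C :^: G | C in Mq] = [set C :^: G | C in maxcycs G] -> Mq = maxcycs G.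
Proof.
move=> eqK; apply/setP=> C; rewrite !inE; apply: andb_idr => maxC.
have /imsetP[D] : C :^: G \in [set C :^: G | C in Mq].
  by rewrite eqK; apply/imsetP; exists C; rewrite ?inE.
rewrite inE => /andP[_ maxDq] /conjugates_eqP/imsetP[g Gg ->].
by rewrite quotientJ ?(subsetP nNG) // maxcyclicJ ?mem_quotient.
Qed.

Lemma maxcyc_classes_quotient_inj :
  {in [set C :^: G | C in maxcycs G] &,
      injective (fun K : {set {set gT}} => [set D / N | D in K])}
  <-> maxcyclic_class_quotient_inj G N.
Proof.
have qclassE x : maxcyclic G <[x]> ->
    [set D / N | D in <[x]> :^: G] = <[coset N x]> :^: (G / N).
  move=> maxX; have Nx := subsetP nNG x (maxcyclic_mem maxX).
  by rewrite quotient_conjugates quotient_cycle.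
have classM z : maxcyclic G <[z]> -> <[z]> :^: G \in [set C :^: G | C in maxcycs G].
  by move=> maxZ; apply/imsetP; exists <[z]>; rewrite ?inE.
split=> [injq x y maxX maxY /conjugates_eqP eqXY | injM].
  by apply/conjugates_eqP; apply: injq; rewrite ?classM //= !qclassE.
move=> _ _ /imsetP[C + ->] /imsetP[D + ->]; rewrite !inE => maxC maxD.
have [x _ defC] := maxcyclic_cycle maxC; have [y _ defD] := maxcyclic_cycle maxD.
rewrite defC defD in maxC maxD *; rewrite !qclassE // => /conjugates_eqP eqXY.
exact/conjugates_eqP/injM.
Qed.

Lemma eta_quotient_eqP : eta_mc (G / N) = eta_mc G <->
  maxcyclic_quotient_stable G N /\ maxcyclic_class_quotient_inj G N.
Proof.
rewrite eta_quotient /eta_mc.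
apply: iff_trans (eq_card_imset_subset _ (imsetS _ sub_Mq_maxcycs)) _.
split=> [[eqK injq] | [/maxcycs_quotient_stable eqM /maxcyc_classes_quotient_inj injq]].
  have eqM := maxcyc_classes_quotient_stable eqK; rewrite eqM in injq.
  by split; [apply/maxcycs_quotient_stable | apply/maxcyc_classes_quotient_inj].
by rewrite eqM.
Qed.

Lemma maxcyclic_quotient_stableP : maxcyclic_quotient_stable G N <->
  Gminus (G / N) = [set Ng in G / N | (Ng : {set gT}) \subset Gminus G].
Proof.
split=> [stab | GmE x maxX]; last first.
  have Gx := maxcyclic_mem maxX; apply: contraT => nmaxXq.
  have: coset N x \in Gminus (G / N) by rewrite inE mem_quotient.
  rewrite GmE inE coset_lcoset // => /andP[_ /subsetP/(_ x (lcoset_refl N x))].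
  by rewrite inE maxX andbF.
apply/setP=> u; rewrite !inE; apply: andb_id2l => /morphimP[g _ Gg ->] /=.
apply/idP/subsetP=> [nmaxU y | sUGm].
  rewrite coset_lcoset // mem_lcoset_coset // => /andP[Gy /eqP yg].
  by rewrite inE Gy; apply: contra nmaxU => /stab; rewrite yg.
apply/negP=> /(maxcyclic_quotient_lift (mem_quotient N Gg))[h maxH hg].
have := sUGm h; rewrite -hg coset_lcoset ?maxcyclic_mem // lcoset_refl inE maxH.
by rewrite andbF => /(_ isT).
Qed.

Lemma maxcyclic_class_quotient_injP : maxcyclic_class_quotient_inj G N <->
  (forall x, x \in G :\: Gminus G -> forall y, y \in (x *: N) :\: Gminus G ->
     exists2 z, generator <[x]> z & y \in z ^: G).
Proof.
split=> [injM x | conjN x y maxX maxY].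
  rewrite mem_setD_Gminus => maxX y /setDP[yNx Gm'y].
  have Gx := maxcyclic_mem maxX.
  move: yNx; rewrite mem_lcoset_coset // => /andP[Gy /eqP yx].
  have maxY : maxcyclic G <[y]> by rewrite -mem_setD_Gminus inE Gm'y.
  by apply/cycle_conjugatesP/injM; rewrite // yx; apply/conjugates_eqP.
case/imsetP=> _ /morphimP[g _ Gg ->] eqYX.
have Gx := maxcyclic_mem maxX; have Gy := maxcyclic_mem maxY.
have [z /eqP genZ zy] : exists2 z, generator <[x ^ g]> z & coset N z = coset N y.
  apply: generator_lift; first by rewrite (subsetP nNG) ?groupJ.
  by rewrite /generator morphJ ?(subsetP nNG) //= cycleJ -eqYX.
have eqZX : <[z]> = <[x]> :^ g by rewrite -genZ cycleJ.
have maxZ : maxcyclic G <[z]> by rewrite eqZX maxcyclicJ.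
have Gz := maxcyclic_mem maxZ.
have /cycle_conjugatesP : exists2 w, generator <[z]> w & y \in w ^: G.
  apply: conjN; first by rewrite mem_setD_Gminus.
  by rewrite !inE maxY andbF mem_lcoset_coset // Gy zy eqxx.
by rewrite eqZX conjugates_conj lcoset_id.
Qed.

Lemma quotient_stable_sub_Gminus : N \proper G ->
  maxcyclic_quotient_stable G N -> N \subset Gminus G.
Proof.
move=> ltNG stab; apply/subsetP=> n Nn; rewrite inE (subsetP sNG) //=.
by apply: contra (quotient_maxcyclic1 ltNG) => /stab; rewrite coset_id // cycle1.
Qed.

Lemma Gminus_union_cosets_pgroup (p : nat) : p.-group G -> N \proper G ->
  maxcyclic_quotient_stable G N -> union_of_cosets (Gminus G) N.
Proof.
move=> pG ltNG stab; apply/union_of_cosetsP=> x; rewrite inE => /andP[Gx nmaxX].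
apply/subsetP=> y; rewrite mem_lcoset_coset // => /andP[Gy /eqP yx].
rewrite inE Gy /=; apply: contra nmaxX => /stab maxXq; rewrite yx in maxXq.
have [h maxH hx] := maxcyclic_exists Gx; have Gh := maxcyclic_mem maxH.
have genX := maxcyclic_quotient_generator Gx Gh hx maxXq.
have nth : coset N h != 1.
  apply: contraNneq (quotient_maxcyclic1 ltNG) => h1.
  by rewrite -cycle1 -h1 (eqP genX).
have Nh := subsetP nNG h Gh.
by rewrite -(eqP (p_elt_morph_generator (mem_p_elt pG Gh) Nh nth hx genX)).
Qed.

Lemma union_cosets_quotient_stable :
  union_of_cosets (Gminus G) N -> maxcyclic_quotient_stable G N.
Proof.
move/union_of_cosetsP=> clGm x maxX; have Gx := maxcyclic_mem maxX.
apply/maxcyclicP; first exact: mem_quotient.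
move=> _ /morphimP[k _ Gk ->] /= sXK.
have [h maxH hk] := maxcyclic_exists Gk; have Gh := maxcyclic_mem maxH.
have Nh := subsetP nNG h Gh.
have sKH : <[k]> \subset <[h]> by rewrite cycle_subG.
have sKHq : <[coset N k]> \subset <[coset N h]>.
  by rewrite -!quotient_cycle ?(subsetP nNG) ?quotientS.
have /cycleP[j xj] : coset N x \in <[coset N h]>.
  by rewrite -cycle_subG; apply: subset_trans sXK sKHq.
have Ghj : h ^+ j \in G by rewrite groupX.
have maxHj : maxcyclic G <[h ^+ j]>.
  apply: contraTT maxX => nmaxHj.
  have: x \in Gminus G.
    apply: (subsetP (clGm (h ^+ j) _)); first by rewrite inE Ghj.
    by rewrite mem_lcoset_coset // Gx morphX // -xj eqxx.
  by rewrite inE Gx.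
have sHHj : <[h]> \subset <[h ^+ j]> := maxcyclicP Ghj maxHj h Gh (cycleX h j).
rewrite xj -morphX // -!quotient_cycle ?(subsetP nNG) //.
exact/quotientS/(subset_trans sKH).
Qed.

Lemma conj_generator_union_cosets :
  (forall x, x \in G :\: Gminus G -> forall y, y \in x *: N ->
     exists2 z, generator <[x]> z & y \in z ^: G) ->
  union_of_cosets (Gminus G) N.
Proof.
move=> conjN; apply/union_of_cosetsC/union_of_cosetsP=> x; rewrite inE => Gm'x.
apply/subsetP=> y yNx; rewrite inE; have [Gx | G'x] := boolP (x \in G).
  have Gm'Gx : x \in G :\: Gminus G by rewrite inE Gm'x.
  have /cycle_conjugatesP/imsetP[g Gg eqY] := conjN x Gm'Gx y yNx.
  by rewrite inE negb_and eqY maxcyclicJ // -mem_setD_Gminus Gm'Gx orbT.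
rewrite inE negb_and; apply/orP; left; apply: contra G'x => Gy.
by move: yNx; rewrite lcoset_sym mem_lcoset => /(subsetP sNG); rewrite groupMl ?groupV.
Qed.

Lemma eta_quotient_eq_union_cosetsP :
  eta_mc (G / N) = eta_mc G /\ union_of_cosets (Gminus G) N <->
  (forall x, x \in G :\: Gminus G -> forall y, y \in x *: N ->
     exists2 z, generator <[x]> z & y \in z ^: G).
Proof.
split=> [[/eta_quotient_eqP[_ /maxcyclic_class_quotient_injP conjN] clGm] | conjN].
  move/union_of_cosetsP: clGm => clGm x Gm'Gx y yNx; apply: (conjN x Gm'Gx y).
  rewrite inE yNx andbT; apply/negP=> Gm_y; move: Gm'Gx.
  by rewrite inE (subsetP (clGm y Gm_y)) // lcoset_sym.
have clGm := conj_generator_union_cosets conjN.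
split=> //; apply/eta_quotient_eqP; split.
  exact: union_cosets_quotient_stable.
by apply/maxcyclic_class_quotient_injP=> x Gm'Gx y /setDP[yNx _]; apply: conjN.
Qed.

Lemma Gminus_quotient_union_cosets : maxcyclic_quotient_stable G N ->
  union_of_cosets (Gminus G) N -> Gminus (G / N) = coset N @: Gminus G.
Proof.
move=> /maxcyclic_quotient_stableP-> /union_of_cosetsP clGm; apply/setP=> u; rewrite inE.
apply/andP/imsetP=> [[/morphimP[g _ Gg ->] sUGm] | [g Gm_g ->]].
  by exists g; rewrite ?(subsetP sUGm) //= coset_lcoset ?lcoset_refl.
have Gg : g \in G by move: Gm_g; rewrite inE => /andP[].
by rewrite mem_quotient // coset_lcoset // clGm.
Qed.

End Quotient.

Unset Implicit Arguments.

Theorem theorem4p1 (gT : finGroupType) (G N : {group gT}) :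
  N <| G -> N \proper G ->
  [/\ (* (1) *)
      eta_mc (G / N) <= eta_mc G,
      (* (2) *)
      eta_mc (G / N) = eta_mc G <->
        [/\ N \subset Gminus G,
            Gminus (G / N) = [set Ng in G / N | (Ng : {set gT}) \subset Gminus G]
          & forall x, x \in G :\: Gminus G ->
              forall y, y \in (x *: N) :\: Gminus G ->
                exists2 z, generator <[x]> z & y \in z ^: G],
      (* (3) *)
      forall p, prime p -> p.-group G -> eta_mc (G / N) = eta_mc G ->
        union_of_cosets (Gminus G) N,
      (* (4) *)
      (eta_mc (G / N) = eta_mc G /\ union_of_cosets (Gminus G) N) <->
        (forall x, x \in G :\: Gminus G ->
           forall y, y \in x *: N ->
             exists2 z, generator <[x]> z & y \in z ^: G)
    & (* (5) *)
      eta_mc (G / N) = eta_mc G -> union_of_cosets (Gminus G) N ->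
        Gminus G * N = Gminus G /\ Gminus (G / N) = coset N @: Gminus G].
Proof.
move=> nsNG ltNG; have etaE := eta_quotient_eqP nsNG.
split.
- exact: eta_quotient_leq.
- split=> [/etaE[stab injM] | [_ GmE conjN]].
    split; first exact: quotient_stable_sub_Gminus.
      exact/maxcyclic_quotient_stableP.
    exact/maxcyclic_class_quotient_injP.
  apply/etaE; split; first exact/maxcyclic_quotient_stableP.
  exact/maxcyclic_class_quotient_injP.
- by move=> p _ pG /etaE[stab _]; apply: Gminus_union_cosets_pgroup pG ltNG stab.
- exact: eta_quotient_eq_union_cosetsP.
move=> /etaE[stab _] clGm.
by split; [apply: union_of_cosets_mulg | apply: Gminus_quotient_union_cosets].
Qed.
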